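(* Let $A\in\mathbb{R}^{d\times n}$ (with $n>d$) have nonzero columns $a_1,\dots,a_n$, let $S\subset\{1,\dots,n\}$ with $|S|=m$, and let $A_S$ be the $d\times m$ matrix of columns $a_i$, $i\in S$, assumed to have full column rank. Suppose that for every $x_0'\in\mathbb{R}^n$ with support exactly $S$, writing $x'_{\mathrm{opt}}\in\mathbb{R}^m$ for its nonzero entries, we have $|a_j^T(A_S^{+})^T\operatorname{sign}(x'_{\mathrm{opt}})|<1$ for all $j\notin S$. Then $\max_{j\notin S}\|A_S^{+}a_j\|_1<1$.
   Context: $A_S^{+}$ is the Moore–Penrose pseudoinverse of $A_S$; $\operatorname{sign}$ is applied componentwise. *)

From HB Require Import structures.
From mathcomp Require Import all_boot all_order all_algebra.
Set Implicit Arguments. Unset Strict Implicit. Unset Printing Implicit Defensive.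
Import Order.TTheory GRing.Theory Num.Theory.
Local Open Scope ring_scope.

(* Submatrix A_S of the columns a_i, i in S, listed in increasing order of i
   (enum of a subset of 'I_n is increasing). *)
Definition colsub_set (R : Type) (d n : nat) (A : 'M[R]_(d, n)) (S : {set 'I_n})
  : 'M[R]_(d, #|S|) := \matrix_(i < d, k < #|S|) A i (@enum_val _ (mem S) k).

Definition restr_set (R : Type) (n : nat) (S : {set 'I_n}) (x : 'cV[R]_n)
  : 'cV[R]_#|S| := \col_(k < #|S|) x (@enum_val _ (mem S) k) 0.

Definition is_MP_pinv (R : numFieldType) (p q : nat) (M : 'M[R]_(p, q)) (X : 'M[R]_(q, p)) : Prop :=
  [/\ M *m X *m M = M, X *m M *m X = X, (M *m X)^T = M *m X & (X *m M)^T = X *m M].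

Definition sign_vec (R : numDomainType) (p : nat) (v : 'cV[R]_p) : 'cV[R]_p :=
  map_mx Num.sg v.

Definition l1norm (R : numDomainType) (p : nat) (v : 'cV[R]_p) : R :=
  \sum_(k < p) `|v k 0|.

(* The hypothesis is an inequality for every sign pattern on S.  Choosing the
   pattern of v := A_S^+ a_j itself (with an arbitrary nonzero sign where v
   vanishes) turns a_j^T (A_S^+)^T sign(x'_opt) = v^T sign(x'_opt) into ||v||_1. *)
From HB Require Import structures.
From mathcomp Require Import all_boot all_order all_algebra.
Set Implicit Arguments. Unset Strict Implicit. Unset Printing Implicit Defensive.
Import Order.TTheory GRing.Theory Num.Theory.
Local Open Scope ring_scope.

Section SignPattern.

Variables (R : realDomainType) (p : nat).

Lemma sign_vec_id (v : 'cV[R]_p) : sign_vec (sign_vec v) = sign_vec v.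
Proof. by apply/matrixP => i j; rewrite !mxE sgr_id. Qed.

Definition sign_pattern (v : 'cV[R]_p) : 'cV[R]_p :=
  sign_vec (\col_k (if v k 0 == 0 then 1 else v k 0)).

Lemma sign_pattern_neq0 (v : 'cV[R]_p) k : sign_pattern v k 0 != 0.
Proof. by rewrite !mxE sgr_eq0; case: ifPn; rewrite ?oner_neq0. Qed.

Lemma sign_vec_sign_pattern (v : 'cV[R]_p) :
  sign_vec (sign_pattern v) = sign_pattern v.
Proof. exact: sign_vec_id. Qed.

Lemma dot_sign_pattern (v : 'cV[R]_p) : (v^T *m sign_pattern v) 0 0 = l1norm v.
Proof.
rewrite mxE; apply: eq_bigr => k _; rewrite !mxE.
by case: eqP => [->|_]; rewrite ?mul0r ?normr0 // mulrC -normrEsg.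
Qed.

End SignPattern.

Section ExtendSet.

Variables (R : nmodType) (n : nat) (S : {set 'I_n}).

Definition extend_set (y : 'cV[R]_#|S|) : 'cV[R]_n :=
  \col_i (if [pick k | @enum_val _ (mem S) k == i] is Some k then y k 0 else 0).

Lemma restr_extend_set (y : 'cV[R]_#|S|) : restr_set S (extend_set y) = y.
Proof.
apply/matrixP => k l; rewrite !ord1 !mxE.
case: pickP => [k' /eqP/enum_val_inj -> // | none].
by have := none k; rewrite eqxx.
Qed.

Lemma extend_set_support (y : 'cV[R]_#|S|) :
  (forall k, y k 0 != 0) -> forall i, (extend_set y i 0 != 0) = (i \in S).
Proof.
move=> y_neq0 i; rewrite mxE; case: pickP => [k /eqP <- | none].
  by rewrite y_neq0 enum_valP.
rewrite eqxx; apply/esym/negbTE/negP => iS.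
by have := none (enum_rank_in iS i); rewrite enum_rankK_in ?eqxx.
Qed.

End ExtendSet.

Theorem lemma3 (R : realFieldType) (d n : nat) (A : 'M[R]_(d, n)) (S : {set 'I_n})
  (X : 'M[R]_(#|S|, d)) :
  (d < n)%N ->
  (forall j : 'I_n, col j A != 0) ->
  \rank (colsub_set A S) = #|S| ->
  is_MP_pinv (colsub_set A S) X ->
  (forall x0 : 'cV[R]_n,
     (forall i : 'I_n, (x0 i 0 != 0) = (i \in S)) ->
     forall j : 'I_n, j \notin S ->
       `| ((col j A)^T *m X^T *m sign_vec (restr_set S x0)) 0 0 | < 1) ->
  forall j : 'I_n, j \notin S -> l1norm (X *m col j A) < 1.
Proof.
move=> _ _ _ _ sign_cond j jS.
set v := X *m col j A.
pose x0 : 'cV[R]_n := extend_set (sign_pattern v).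
have x0_support := extend_set_support (sign_pattern_neq0 v).
have := sign_cond x0 x0_support j jS.
rewrite restr_extend_set sign_vec_sign_pattern -trmx_mul dot_sign_pattern.
exact: le_lt_trans (ler_norm _).
Qed.
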